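(* Let $F:\mathbb{R}\to\mathbb{R}$, $b\in\mathbb{R}$ and $\gamma>0$ satisfy A1 and A2, with $\nu,\omega^{(0)},\Lambda_j,V$ as in the context. Then $\Lambda_j\in\mathbb{R}\setminus\{0\}$ for $1\le j\le\nu$; $V(\omega^{(0)})(e_j+e_l)\in\mathbb{R}\setminus\{0\}$ for $1\le j,l\le\nu$; and $V(\omega^{(0)})(e_j-e_l)\in\mathbb{R}\setminus\{0\}$ for $1\le j\ne l\le\nu$.
   Context: A1: $F$ is real analytic in a neighborhood of $-b$ with $F'(-b)>0$. A2: $0<\gamma<\sqrt{F'(-b)}$ and $2\sqrt{F'(-b)}\notin\gamma\mathbb{Z}$. $\nu$ is the integer with $\nu\gamma<2\sqrt{F'(-b)}<(\nu+1)\gamma$; $\omega^{(0)}_j=2\arcsin(j\gamma/(2\sqrt{F'(-b)}))$, $\omega^{(0)}=(\omega^{(0)}_1,\dots,\omega^{(0)}_\nu)$; $g=(1,\dots,\nu)$; $e_j$ the $j$-th unit vector in $\mathbb{Z}^\nu$; $\Lambda_j=\frac{(j\gamma)^2\cos(\omega^{(0)}_j/2)}{4\sin^3(\omega^{(0)}_j/2)}$; for $m\in\mathbb{Z}^\nu$, $V(\omega)(m)=F'(-b)$ if $\langle g,m\rangle=0$ and $V(\omega)(m)=F'(-b)-\frac{\langle g,m\rangle^2\gamma^2}{4\sin^2(\langle\omega,m\rangle/2)}$ otherwise (with value $\infty$ if $\langle g,m\rangle\ne0$ and $\langle\omega,m\rangle\in2\pi\mathbb{Z}$). *)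

From Stdlib Require Import Reals ZArith ClassicalEpsilon.
From Coquelicot Require Import Coquelicot.
Open Scope R_scope.

Definition real_analytic_near (F : R -> R) (x0 : R) : Prop :=
  exists r : R, 0 < r /\ exists a : nat -> R,
    forall x, Rabs (x - x0) < r -> is_pseries a (x - x0) (F x).

(* Sums over the index range 1..n :  rsum n f = f 1 + ... + f n. *)
Fixpoint rsum (n : nat) (f : nat -> R) : R :=
  match n with O => 0 | S k => rsum k f + f (S k) end.
Fixpoint zsum (n : nat) (f : nat -> Z) : Z :=
  match n with O => 0%Z | S k => (zsum k f + f (S k))%Z end.

(* Vectors of Z^nu / R^nu are represented as functions nat -> _, indices 1..nu. *)
Definition gdot (nu : nat) (m : nat -> Z) : Z :=
  zsum nu (fun j => (Z.of_nat j * m j)%Z).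
Definition wdot (nu : nat) (omega : nat -> R) (m : nat -> Z) : R :=
  rsum nu (fun j => omega j * IZR (m j)).

Definition ev (j : nat) : nat -> Z := fun i => if Nat.eqb i j then 1%Z else 0%Z.
Definition vadd (m n : nat -> Z) : nat -> Z := fun i => (m i + n i)%Z.
Definition vsub (m n : nat -> Z) : nat -> Z := fun i => (m i - n i)%Z.

(* omega^(0)_j = 2 arcsin(j gamma / (2 sqrt(F'(-b)))), with c = F'(-b) *)
Definition omega0 (c gamma : R) (j : nat) : R :=
  2 * asin (INR j * gamma / (2 * sqrt c)).

Definition Lambda (c gamma : R) (j : nat) : R :=
  (INR j * gamma) ^ 2 * cos (omega0 c gamma j / 2)
  / (4 * (sin (omega0 c gamma j / 2)) ^ 3).

(* V(omega)(m): value in R, or None standing for the value "infinity". *)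
Definition V (nu : nat) (c gamma : R) (omega : nat -> R) (m : nat -> Z) : option R :=
  let k := gdot nu m in
  if Z.eqb k 0 then Some c
  else if excluded_middle_informative (exists z : Z, wdot nu omega m = 2 * PI * IZR z)
       then None
       else Some (c - (IZR k) ^ 2 * gamma ^ 2
                      / (4 * (sin (wdot nu omega m / 2)) ^ 2)).

Definition real_nonzero (v : option R) : Prop :=
  exists x : R, v = Some x /\ x <> 0.

(* Write theta_j = omega0_j / 2 = asin (j gamma / (2 sqrt c)), so that theta_j lies in
   (0, pi/2) and j gamma = 2 sqrt c sin theta_j.  Then Lambda_j > 0 because sine and cosine
   are positive there.  For m = e_j +- e_l one has <g,m> = j +- l and <omega0,m> / 2 =
   theta_j +- theta_l, and V(omega0)(m) = c (1 - S^2 / sin^2 phi) with S = sin theta_j +-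
   sin theta_l and phi = theta_j +- theta_l.  The identities
     (sin a + sin b)^2 - sin (a + b)^2 = 4 sin ((a + b)/2)^2 sin a sin b,
     sin (a - b)^2 - (sin a - sin b)^2 = 4 sin ((a - b)/2)^2 sin a sin b
   show S^2 <> sin^2 phi, and also sin phi <> 0, which excludes <omega0,m> in 2 pi Z.  Only c = F'(-b) > 0 and nu gamma < 2 sqrt c are needed: neither
   analyticity nor non-resonance plays a role. *)
From Stdlib Require Import Reals ZArith Lra Lia Psatz ClassicalEpsilon.
From Coquelicot Require Import Coquelicot.
Open Scope R_scope.

Lemma zsum_ev n j (f : nat -> Z) : (1 <= j)%nat ->
  zsum n (fun i => (f i * ev j i)%Z) = if (j <=? n)%nat then f j else 0%Z.
Proof.
  intros Hj; induction n as [|n IH]; simpl.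
  - destruct j; [lia | reflexivity].
  - rewrite IH; unfold ev.
    destruct (Nat.eqb_spec (S n) j), (Nat.leb_spec j n), (Nat.leb_spec j (S n));
      try lia; subst; ring.
Qed.

Lemma rsum_ev n j (f : nat -> R) : (1 <= j)%nat ->
  rsum n (fun i => f i * IZR (ev j i)) = if (j <=? n)%nat then f j else 0.
Proof.
  intros Hj; induction n as [|n IH]; simpl.
  - destruct j; [lia | reflexivity].
  - rewrite IH; unfold ev.
    destruct (Nat.eqb_spec (S n) j), (Nat.leb_spec j n), (Nat.leb_spec j (S n));
      try lia; subst; ring.
Qed.

Lemma gdot_vadd n m m' : gdot n (vadd m m') = (gdot n m + gdot n m')%Z.
Proof. unfold gdot, vadd; induction n as [|n IH]; cbn [zsum]; [reflexivity | rewrite IH; ring]. Qed.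

Lemma gdot_vsub n m m' : gdot n (vsub m m') = (gdot n m - gdot n m')%Z.
Proof. unfold gdot, vsub; induction n as [|n IH]; cbn [zsum]; [reflexivity | rewrite IH; ring]. Qed.

Lemma wdot_vadd n w m m' : wdot n w (vadd m m') = wdot n w m + wdot n w m'.
Proof.
  unfold wdot, vadd; induction n as [|n IH]; cbn [rsum]; [ring | rewrite IH, plus_IZR; ring].
Qed.

Lemma wdot_vsub n w m m' : wdot n w (vsub m m') = wdot n w m - wdot n w m'.
Proof.
  unfold wdot, vsub; induction n as [|n IH]; cbn [rsum]; [ring | rewrite IH, minus_IZR; ring].
Qed.

Lemma gdot_ev n j : (1 <= j <= n)%nat -> gdot n (ev j) = Z.of_nat j.
Proof.
  intros Hj; unfold gdot; rewrite zsum_ev by lia.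
  destruct (Nat.leb_spec j n); [reflexivity | lia].
Qed.

Lemma wdot_ev n w j : (1 <= j <= n)%nat -> wdot n w (ev j) = w j.
Proof.
  intros Hj; unfold wdot; rewrite rsum_ev by lia.
  destruct (Nat.leb_spec j n); [reflexivity | lia].
Qed.

Lemma not_in_2PIZ x : sin (x / 2) <> 0 -> ~ exists z : Z, x = 2 * PI * IZR z.
Proof.
  intros Hs [z Hz]; apply Hs, sin_eq_0_1.
  exists z; rewrite Hz; field.
Qed.

Lemma V_real_nonzero nu c gamma omega m :
  gdot nu m <> 0%Z -> sin (wdot nu omega m / 2) <> 0 ->
  c - IZR (gdot nu m) ^ 2 * gamma ^ 2 / (4 * sin (wdot nu omega m / 2) ^ 2) <> 0 ->
  real_nonzero (V nu c gamma omega m).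
Proof.
  intros Hk Hs Hv; unfold V; cbv zeta.
  destruct (Z.eqb_spec (gdot nu m) 0) as [Hk0 | _]; [contradiction |].
  destruct (excluded_middle_informative _) as [Hres | _].
  - exfalso; exact (not_in_2PIZ _ Hs Hres).
  - eexists; split; [reflexivity | exact Hv].
Qed.

Lemma sub_sq_div_sin_sq_neq0 c gamma K S phi :
  0 < c -> K * gamma = 2 * sqrt c * S -> sin phi <> 0 -> S ^ 2 <> sin phi ^ 2 ->
  c - K ^ 2 * gamma ^ 2 / (4 * sin phi ^ 2) <> 0.
Proof.
  intros Hc HK Hphi HS.
  assert (Hsq : sqrt c * sqrt c = c) by (apply sqrt_sqrt; lra).
  replace (K ^ 2 * gamma ^ 2) with (4 * c * S ^ 2)
    by (rewrite <- Hsq; replace (K ^ 2 * gamma ^ 2) with ((K * gamma) ^ 2) by ring;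
        rewrite HK; ring).
  replace (c - 4 * c * S ^ 2 / (4 * sin phi ^ 2))
    with (c * (sin phi ^ 2 - S ^ 2) / sin phi ^ 2)
    by (field; exact Hphi).
  apply Rmult_integral_contrapositive_currified.
  - apply Rmult_integral_contrapositive_currified; [lra |].
    intro H; apply HS; lra.
  - apply Rinv_neq_0_compat, pow_nonzero; exact Hphi.
Qed.

Lemma sin_double_half x : sin x = 2 * sin (x / 2) * cos (x / 2).
Proof. rewrite <- sin_2a; f_equal; field. Qed.

Lemma cos_half_sq_sub a b :
  cos ((a - b) / 2) ^ 2 - cos ((a + b) / 2) ^ 2 = sin a * sin b.
Proof.
  replace ((a - b) / 2) with (a / 2 - b / 2) by field.
  replace ((a + b) / 2) with (a / 2 + b / 2) by field.
  rewrite cos_minus, cos_plus.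
  rewrite (sin_double_half a), (sin_double_half b); ring.
Qed.

Lemma sin_add_sq_lt a b : 0 < a < PI -> 0 < b < PI ->
  sin (a + b) ^ 2 < (sin a + sin b) ^ 2.
Proof.
  intros Ha Hb.
  assert (Hid : (sin a + sin b) ^ 2 - sin (a + b) ^ 2
                = 4 * sin ((a + b) / 2) ^ 2 * (sin a * sin b)).
  { rewrite form3, (sin_double_half (a + b)), <- cos_half_sq_sub; ring. }
  assert (0 < sin ((a + b) / 2)) by (apply sin_gt_0; lra).
  assert (0 < sin a) by (apply sin_gt_0; lra).
  assert (0 < sin b) by (apply sin_gt_0; lra).
  assert (0 < 4 * sin ((a + b) / 2) ^ 2 * (sin a * sin b))
    by (apply Rmult_lt_0_compat; [apply Rmult_lt_0_compat; [lra | apply pow_lt; lra] | nra]).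
  lra.
Qed.

Lemma sin_sub_sq_gt a b : 0 < a < PI -> 0 < b < PI -> a <> b ->
  (sin a - sin b) ^ 2 < sin (a - b) ^ 2.
Proof.
  intros Ha Hb Hab.
  assert (Hid : sin (a - b) ^ 2 - (sin a - sin b) ^ 2
                = 4 * sin ((a - b) / 2) ^ 2 * (sin a * sin b)).
  { rewrite form4, (sin_double_half (a - b)), <- cos_half_sq_sub; ring. }
  assert (Hhalf : sin ((a - b) / 2) <> 0).
  { destruct (Rlt_or_le 0 ((a - b) / 2)).
    - apply Rgt_not_eq, sin_gt_0; lra.
    - replace ((a - b) / 2) with (- ((b - a) / 2)) by field.
      rewrite sin_neg; apply Ropp_neq_0_compat, Rgt_not_eq, sin_gt_0; lra. }
  assert (0 < sin a) by (apply sin_gt_0; lra).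
  assert (0 < sin b) by (apply sin_gt_0; lra).
  assert (0 < 4 * sin ((a - b) / 2) ^ 2 * (sin a * sin b))
    by (apply Rmult_lt_0_compat;
        [apply Rmult_lt_0_compat; [lra | apply pow2_gt_0; exact Hhalf] | nra]).
  lra.
Qed.

Section HalfFrequencies.

Variables (c gamma : R) (nu : nat).
Hypotheses (Hc : 0 < c) (Hgamma : 0 < gamma) (Hnu : INR nu * gamma < 2 * sqrt c).

Definition theta (j : nat) : R := asin (INR j * gamma / (2 * sqrt c)).

Lemma omega0_theta j : omega0 c gamma j = 2 * theta j.
Proof. reflexivity. Qed.

Lemma theta_arg_bounds j : (1 <= j <= nu)%nat ->
  0 < INR j * gamma / (2 * sqrt c) < 1.
Proof.
  intros Hj.
  assert (Hs : 0 < sqrt c) by (apply sqrt_lt_R0; exact Hc).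
  assert (1 <= INR j) by (apply (le_INR 1); lia).
  assert (INR j <= INR nu) by (apply le_INR; lia).
  split.
  - apply Rdiv_lt_0_compat; nra.
  - apply Rlt_div_l; nra.
Qed.

Lemma scaled_sin_theta j : (1 <= j <= nu)%nat ->
  INR j * gamma = 2 * sqrt c * sin (theta j).
Proof.
  intros Hj; pose proof (theta_arg_bounds j Hj).
  assert (0 < sqrt c) by (apply sqrt_lt_R0; exact Hc).
  unfold theta; rewrite sin_asin by lra; field; lra.
Qed.

Lemma theta_bounds j : (1 <= j <= nu)%nat -> 0 < theta j < PI / 2.
Proof.
  intros Hj; pose proof (theta_arg_bounds j Hj) as Harg.
  pose proof (asin_bound_lt (INR j * gamma / (2 * sqrt c)) ltac:(lra)) as Hb.
  fold (theta j) in Hb.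
  split; [| lra].
  destruct (Rlt_or_le 0 (theta j)) as [| Hle]; [assumption | exfalso].
  assert (Hsin : sin (theta j) = INR j * gamma / (2 * sqrt c))
    by (unfold theta; apply sin_asin; lra).
  pose proof (sin_ge_0 (- theta j) ltac:(lra) ltac:(lra)) as Hneg.
  rewrite sin_neg in Hneg; lra.
Qed.

Lemma theta_inj j l : (1 <= j <= nu)%nat -> (1 <= l <= nu)%nat -> j <> l ->
  theta j <> theta l.
Proof.
  intros Hj Hl Hjl Heq; apply Hjl, INR_eq.
  apply (Rmult_eq_reg_r gamma); [| lra].
  rewrite (scaled_sin_theta j Hj), (scaled_sin_theta l Hl), Heq; reflexivity.
Qed.

Lemma Lambda_pos j : (1 <= j <= nu)%nat -> 0 < Lambda c gamma j.
Proof.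
  intros Hj; pose proof (theta_bounds j Hj).
  assert (1 <= INR j) by (apply (le_INR 1); lia).
  unfold Lambda; rewrite omega0_theta.
  replace (2 * theta j / 2) with (theta j) by field.
  assert (0 < cos (theta j)) by (apply cos_gt_0; lra).
  assert (0 < sin (theta j)) by (apply sin_gt_0; lra).
  apply Rdiv_lt_0_compat.
  - apply Rmult_lt_0_compat; [apply pow_lt; nra | lra].
  - apply Rmult_lt_0_compat; [lra | apply pow_lt; lra].
Qed.

Lemma V_vadd_nonzero j l : (1 <= j <= nu)%nat -> (1 <= l <= nu)%nat ->
  real_nonzero (V nu c gamma (omega0 c gamma) (vadd (ev j) (ev l))).
Proof.
  intros Hj Hl.
  pose proof (theta_bounds j Hj) as Htj; pose proof (theta_bounds l Hl) as Htl.
  apply V_real_nonzero;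
    rewrite ?gdot_vadd, ?wdot_vadd, ?gdot_ev, ?wdot_ev, ?omega0_theta by assumption;
    replace ((2 * theta j + 2 * theta l) / 2) with (theta j + theta l) by field.
  - lia.
  - apply Rgt_not_eq, sin_gt_0; lra.
  - apply (sub_sq_div_sin_sq_neq0 _ _ _ (sin (theta j) + sin (theta l))).
    + exact Hc.
    + rewrite plus_IZR, <- !INR_IZR_INZ, Rmult_plus_distr_r,
        (scaled_sin_theta j Hj), (scaled_sin_theta l Hl); ring.
    + apply Rgt_not_eq, sin_gt_0; lra.
    + pose proof (sin_add_sq_lt (theta j) (theta l)); lra.
Qed.

Lemma V_vsub_nonzero j l : (1 <= j <= nu)%nat -> (1 <= l <= nu)%nat -> j <> l ->
  real_nonzero (V nu c gamma (omega0 c gamma) (vsub (ev j) (ev l))).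
Proof.
  intros Hj Hl Hjl.
  pose proof (theta_bounds j Hj) as Htj; pose proof (theta_bounds l Hl) as Htl.
  assert (Hlt : (sin (theta j) - sin (theta l)) ^ 2 < sin (theta j - theta l) ^ 2)
    by (apply sin_sub_sq_gt; [lra | lra | exact (theta_inj j l Hj Hl Hjl)]).
  assert (Hphi : sin (theta j - theta l) <> 0)
    by (intro Hzero; rewrite Hzero in Hlt;
        pose proof (pow2_ge_0 (sin (theta j) - sin (theta l))); lra).
  apply V_real_nonzero;
    rewrite ?gdot_vsub, ?wdot_vsub, ?gdot_ev, ?wdot_ev, ?omega0_theta by assumption;
    replace ((2 * theta j - 2 * theta l) / 2) with (theta j - theta l) by field.
  - lia.
  - exact Hphi.
  - apply (sub_sq_div_sin_sq_neq0 _ _ _ (sin (theta j) - sin (theta l))).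
    + exact Hc.
    + rewrite minus_IZR, <- !INR_IZR_INZ, Rmult_minus_distr_r,
        (scaled_sin_theta j Hj), (scaled_sin_theta l Hl); ring.
    + exact Hphi.
    + lra.
Qed.

End HalfFrequencies.

Theorem lemma11 (F : R -> R) (b gamma : R) (nu : nat)
  (A1_an : real_analytic_near F (- b))
  (A1_pos : Derive F (- b) > 0)
  (A2_gamma : 0 < gamma < sqrt (Derive F (- b)))
  (A2_nonres : forall k : Z, 2 * sqrt (Derive F (- b)) <> IZR k * gamma)
  (Hnu : INR nu * gamma < 2 * sqrt (Derive F (- b)) < INR (S nu) * gamma) :
  let c := Derive F (- b) in
  let w0 := omega0 c gamma in
  (forall j : nat, (1 <= j <= nu)%nat -> Lambda c gamma j <> 0) /\
  (forall j l : nat, (1 <= j <= nu)%nat -> (1 <= l <= nu)%nat ->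
     real_nonzero (V nu c gamma w0 (vadd (ev j) (ev l)))) /\
  (forall j l : nat, (1 <= j <= nu)%nat -> (1 <= l <= nu)%nat -> j <> l ->
     real_nonzero (V nu c gamma w0 (vsub (ev j) (ev l)))).
Proof.
  intros c w0.
  assert (Hc : 0 < c) by exact A1_pos.
  assert (Hgamma : 0 < gamma) by apply A2_gamma.
  assert (Hnu_lt : INR nu * gamma < 2 * sqrt c) by apply Hnu.
  split; [| split].
  - intros j Hj; apply Rgt_not_eq, (Lambda_pos c gamma nu); assumption.
  - intros j l Hj Hl; apply (V_vadd_nonzero c gamma nu); assumption.
  - intros j l Hj Hl Hjl; apply (V_vsub_nonzero c gamma nu); assumption.
Qed.
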